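(* Let $\mathbf{W}=\langle W;\to,\neg,{}^{+},{}^{-},1\rangle$ be a quasi-Wajsberg* algebra and $\tau$ the congruence on $\mathbf{W}$ defined by $\langle x,y\rangle\in\tau$ iff $x=y$ or $x,y\in R(W)$. Then the quotient $\mathbf{W}/\tau$ is a flat quasi-Wajsberg* algebra.
   Context: A quasi-Wajsberg* algebra is an algebra $\langle W;\to,\neg,{}^{+},{}^{-},1\rangle$ of type $\langle2,1,1,1,0\rangle$ such that for all $x,y,z\in W$: (QW*1) $x\to y=\neg y\to\neg x$; (QW*2) $(x\to 1)\to((y\to 1)\to z)=(y\to 1)\to((x\to 1)\to z)$; (QW*3) $(1\to x)\to 1=1$; (QW*4) $(z\to z)\to(x\to y)=x\to y$; (QW*5) $(1\to 1)\to x^{+}=((1\to 1)\to x)^{+}=(x\to 1)\to 1$ and $(1\to 1)\to x^{-}=((1\to 1)\to x)^{-}=(x\to\neg 1)\to\neg 1$; (QW*6) $x\to y=(y^{+}\to x^{-})\to(x^{+}\to y^{-})$; (QW*7) $\neg(x\to y)=y\to x$; (QW*8) $\neg\neg x=x$; (QW*9) $(x\to(\neg x\to y))^{+}=x^{+}\to(\neg x^{+}\to y^{+})$; (QW*10) $x\vee y=y\vee x$; (QW*11) $x\vee(y\vee z)=(x\vee y)\vee z$; (QW*12) $x\to(y\vee z)=(x\to y)\vee(x\to z)$; where $x\vee y:=((x^{+}\to y^{+})^{+}\to(\neg x)^{-})\to((y^{-}\to x^{-})^{-}\to x^{-})$. Conventions: ${}^+,{}^-$ bind tighter than $\neg$,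 which binds tighter than $\to$. Put $0:=1\to 1$ and $R(W):=\{x\in W:0\to x=x\}$. The quotient $\mathbf{W}/\tau$ has the induced operations $(x/\tau)\to(y/\tau)=(x\to y)/\tau$, $\neg(x/\tau)=(\neg x)/\tau$, $(x/\tau)^{+}=x^{+}/\tau$, $(x/\tau)^{-}=x^{-}/\tau$ and constant $1/\tau$. A quasi-Wajsberg* algebra is flat if it satisfies $0=1$, i.e. $1\to 1=1$. *)

Section QW.
Variable W : Type.
Variables (imp : W -> W -> W) (neg plus minus : W -> W) (one : W).

Definition qw_join (x y : W) : W :=
  imp (imp (plus (imp (plus x) (plus y))) (minus (neg x)))
      (imp (minus (imp (minus y) (minus x))) (minus x)).

Definition is_QWstar : Prop :=
  (forall x y, imp x y = imp (neg y) (neg x)) /\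
  (forall x y z, imp (imp x one) (imp (imp y one) z)
                 = imp (imp y one) (imp (imp x one) z)) /\
  (forall x, imp (imp one x) one = one) /\
  (forall x y z, imp (imp z z) (imp x y) = imp x y) /\
  (forall x, imp (imp one one) (plus x) = plus (imp (imp one one) x) /\
             plus (imp (imp one one) x) = imp (imp x one) one) /\
  (forall x, imp (imp one one) (minus x) = minus (imp (imp one one) x) /\
             minus (imp (imp one one) x) = imp (imp x (neg one)) (neg one)) /\
  (forall x y, imp x y = imp (imp (plus y) (minus x)) (imp (plus x) (minus y))) /\
  (forall x y, neg (imp x y) = imp y x) /\
  (forall x, neg (neg x) = x) /\
  (forall x y, plus (imp x (imp (neg x) y))
               = imp (plus x) (imp (neg (plus x)) (plus y))) /\
  (forall x y, qw_join x y = qw_join y x) /\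
  (forall x y z, qw_join x (qw_join y z) = qw_join (qw_join x y) z) /\
  (forall x y z, imp x (qw_join y z) = qw_join (imp x y) (imp x z)).

Definition qw_zero : W := imp one one.
Definition in_R (x : W) : Prop := imp qw_zero x = x.

Definition tau (x y : W) : Prop := x = y \/ (in_R x /\ in_R y).

Definition is_flat : Prop := imp one one = one.
End QW.

Arguments qw_join {W}.
Arguments is_QWstar {W}.
Arguments qw_zero {W}.
Arguments in_R {W}.
Arguments tau {W}.
Arguments is_flat {W}.

Definition is_hom {W Q : Type}
  (imp : W -> W -> W) (neg plus minus : W -> W) (one : W)
  (impQ : Q -> Q -> Q) (negQ plusQ minusQ : Q -> Q) (oneQ : Q) (pi : W -> Q) : Prop :=
  (forall x y, pi (imp x y) = impQ (pi x) (pi y)) /\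
  (forall x, pi (neg x) = negQ (pi x)) /\
  (forall x, pi (plus x) = plusQ (pi x)) /\
  (forall x, pi (minus x) = minusQ (pi x)) /\
  pi one = oneQ.

(* The class R(W) contains 1 and every value of ->, and is closed under the
   unary operations; hence collapsing R(W) to the single point 1 is a
   congruence, the quotient is a homomorphic image of W and so satisfies the
   identities QW*1-QW*12, and in it 1 -> 1 and 1, both in R(W), coincide. *)

From Stdlib Require Import ClassicalEpsilon ProofIrrelevance.

Section Collapse.
Variables (T : Type) (P : T -> Prop) (p : T).
Hypothesis Pp : P p.

Definition collapse (x : T) : T :=
  if excluded_middle_informative (P x) then p else x.

Lemma collapse_P (x : T) : P x -> collapse x = p.
Proof.
  intros Px; unfold collapse.
  destruct (excluded_middle_informative (P x)); [reflexivity | contradiction].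
Qed.

Lemma collapse_notP (x : T) : ~ P x -> collapse x = x.
Proof.
  intros nPx; unfold collapse.
  destruct (excluded_middle_informative (P x)); [contradiction | reflexivity].
Qed.

Lemma collapse_eq_iff (x y : T) :
  collapse x = collapse y <-> x = y \/ (P x /\ P y).
Proof.
  destruct (classic (P x)) as [Px | nPx], (classic (P y)) as [Py | nPy].
  - rewrite (collapse_P _ Px), (collapse_P _ Py); tauto.
  - rewrite (collapse_P _ Px), (collapse_notP _ nPy).
    split; [intros <-; contradiction | intros [<- | []]; tauto].
  - rewrite (collapse_notP _ nPx), (collapse_P _ Py).
    split; [intros ->; contradiction | intros [-> | []]; tauto].
  - rewrite (collapse_notP _ nPx), (collapse_notP _ nPy); tauto.
Qed.

Lemma collapse_idem (x : T) : collapse (collapse x) = collapse x.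
Proof.
  destruct (classic (P x)) as [Px | nPx].
  - rewrite (collapse_P _ Px); exact (collapse_P _ Pp).
  - rewrite (collapse_notP _ nPx); exact (collapse_notP _ nPx).
Qed.

Definition collapsed : Type := {x : T | collapse x = x}.

Definition collapse_pi (x : T) : collapsed := exist _ (collapse x) (collapse_idem x).

Lemma collapse_pi_surj (q : collapsed) : exists x, collapse_pi x = q.
Proof.
  destruct q as [x Hx]; exists x; apply subset_eq_compat; exact Hx.
Qed.

Lemma collapse_pi_eq_iff (x y : T) :
  collapse_pi x = collapse_pi y <-> x = y \/ (P x /\ P y).
Proof.
  rewrite <- collapse_eq_iff; split.
  - intros E; exact (f_equal (@proj1_sig _ _) E).
  - intros E; apply subset_eq_compat; exact E.
Qed.

Definition lift1 (f : T -> T) (q : collapsed) : collapsed :=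
  collapse_pi (f (proj1_sig q)).

Definition lift2 (f : T -> T -> T) (a b : collapsed) : collapsed :=
  collapse_pi (f (proj1_sig a) (proj1_sig b)).

Lemma lift1_pi (f : T -> T) (fP : forall x, P x -> P (f x)) (x : T) :
  lift1 f (collapse_pi x) = collapse_pi (f x).
Proof.
  apply collapse_pi_eq_iff; simpl.
  destruct (classic (P x)) as [Px | nPx].
  - rewrite (collapse_P _ Px); right; split; auto.
  - rewrite (collapse_notP _ nPx); left; reflexivity.
Qed.

Lemma lift2_pi (f : T -> T -> T) (fP : forall x y, P (f x y)) (x y : T) :
  lift2 f (collapse_pi x) (collapse_pi y) = collapse_pi (f x y).
Proof. apply collapse_pi_eq_iff; right; split; apply fP. Qed.

End Collapse.

Arguments collapse_pi {T} P p Pp x.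
Arguments lift1 {T} P p Pp f q.
Arguments lift2 {T} P p Pp f a b.

Section HomImage.
Context {W Q : Type}.
Context {imp : W -> W -> W} {neg plus minus : W -> W} {one : W}.
Context {impQ : Q -> Q -> Q} {negQ plusQ minusQ : Q -> Q} {oneQ : Q}.
Context {pi : W -> Q}.
Hypothesis pi_hom : is_hom imp neg plus minus one impQ negQ plusQ minusQ oneQ pi.
Hypothesis pi_surj : forall q : Q, exists x : W, pi x = q.

Lemma hom_qw_join (x y : W) :
  pi (qw_join imp neg plus minus x y) = qw_join impQ negQ plusQ minusQ (pi x) (pi y).
Proof.
  pose proof pi_hom as (Himp & Hneg & Hplus & Hminus & _).
  unfold qw_join.
  repeat (rewrite Himp || rewrite Hneg || rewrite Hplus || rewrite Hminus).
  reflexivity.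
Qed.

Local Ltac intros_as_images :=
  repeat (let q := fresh "q" in intro q; destruct (pi_surj q) as [? <-]).

Lemma is_QWstar_hom_image :
  is_QWstar imp neg plus minus one -> is_QWstar impQ negQ plusQ minusQ oneQ.
Proof.
  intros (A1 & A2 & A3 & A4 & A5p & A5m & A6 & A7 & A8 & A9 & A10 & A11 & A12).
  pose proof pi_hom as (Himp & Hneg & Hplus & Hminus & Hone).
  (* Write every variable as pi x, then push pi outwards through the term. *)
  repeat (intros_as_images; split); intros_as_images;
    rewrite <- ?Hone;
    repeat (rewrite <- Himp || rewrite <- Hneg || rewrite <- Hplus
            || rewrite <- Hminus || rewrite <- hom_qw_join);
    apply (f_equal pi).
  - apply A1.
  - apply A2.
  - apply A3.
  - apply A4.
  - apply A5p.
  - apply A5p.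
  - apply A5m.
  - apply A5m.
  - apply A6.
  - apply A7.
  - apply A8.
  - apply A9.
  - apply A10.
  - apply A11.
  - apply A12.
Qed.

End HomImage.

Section QWstar.
Context {W : Type} {imp : W -> W -> W} {neg plus minus : W -> W} {one : W}.
Hypothesis HW : is_QWstar imp neg plus minus one.

Lemma in_R_imp (x y : W) : in_R imp one (imp x y).
Proof. destruct HW as (_ & _ & _ & A4 & _); apply A4. Qed.

Lemma in_R_one : in_R imp one one.
Proof. destruct HW as (_ & _ & A3 & _); apply A3. Qed.

Lemma in_R_neg (x : W) : in_R imp one x -> in_R imp one (neg x).
Proof.
  destruct HW as (_ & _ & _ & _ & _ & _ & _ & A7 & _).
  intros Rx; rewrite <- Rx, A7; apply in_R_imp.
Qed.

Lemma in_R_plus (x : W) : in_R imp one x -> in_R imp one (plus x).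
Proof.
  destruct HW as (_ & _ & _ & _ & A5p & _).
  intros Rx; unfold in_R, qw_zero in Rx; rewrite <- Rx, (proj2 (A5p x)); apply in_R_imp.
Qed.

Lemma in_R_minus (x : W) : in_R imp one x -> in_R imp one (minus x).
Proof.
  destruct HW as (_ & _ & _ & _ & _ & A5m & _).
  intros Rx; unfold in_R, qw_zero in Rx; rewrite <- Rx, (proj2 (A5m x)); apply in_R_imp.
Qed.

End QWstar.

Theorem proposition4p4 (W : Type)
  (imp : W -> W -> W) (neg plus minus : W -> W) (one : W)
  (HW : is_QWstar imp neg plus minus one) :
  exists (Q : Type) (impQ : Q -> Q -> Q) (negQ plusQ minusQ : Q -> Q) (oneQ : Q)
         (pi : W -> Q),
    (forall q : Q, exists x : W, pi x = q) /\
    (forall x y : W, pi x = pi y <-> tau imp one x y) /\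
    is_hom imp neg plus minus one impQ negQ plusQ minusQ oneQ pi /\
    is_QWstar impQ negQ plusQ minusQ oneQ /\
    is_flat impQ oneQ.
Proof.
  pose (Rone := in_R_one HW).
  pose (pi := collapse_pi (in_R imp one) one Rone).
  pose (impQ := lift2 _ _ Rone imp).
  pose (negQ := lift1 _ _ Rone neg).
  pose (plusQ := lift1 _ _ Rone plus).
  pose (minusQ := lift1 _ _ Rone minus).
  assert (pi_hom : is_hom imp neg plus minus one impQ negQ plusQ minusQ (pi one) pi).
  { repeat split; intros; symmetry.
    - apply lift2_pi, (in_R_imp HW).
    - apply lift1_pi, (in_R_neg HW).
    - apply lift1_pi, (in_R_plus HW).
    - apply lift1_pi, (in_R_minus HW). }
  exists _, impQ, negQ, plusQ, minusQ, (pi one), pi.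
  split; [|split; [|split; [|split]]].
  - apply collapse_pi_surj.
  - apply collapse_pi_eq_iff.
  - exact pi_hom.
  - exact (is_QWstar_hom_image pi_hom (collapse_pi_surj _ _ _ Rone) HW).
  - unfold is_flat; transitivity (pi (imp one one)).
    + apply lift2_pi, (in_R_imp HW).
    + apply collapse_pi_eq_iff; right; split; [apply (in_R_imp HW) | exact Rone].
Qed.
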